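(* Let $P\subset\mathbb{R}^{n+1}$ be an $n$-dimensional lattice polytope contained in the affine hyperplane $\{x_{n+1}=1\}$, of degree $d$, let $x$ be a lattice point in the relative interior of $(n-d+1)P$, and let $S\subset P$ be an $n$-dimensional lattice simplex with vertices $v_0,\dots,v_n$ such that $x$ lies in the cone spanned by $S$. Let $\sigma$ be the cone spanned by $P$. Then for every point $y\in\sigma$, $|V^-(y)|\le|Z^+(y)|$.
   Context: Lattice points are points of $\mathbb{Z}^{n+1}$. The degree $d$ of $P$ is the degree of the $h^*$-polynomial $h^*_P(t)$ defined by $\sum_{m\ge0}|mP\cap\mathbb{Z}^{n+1}|t^m=h^*_P(t)/(1-t)^{n+1}$; equivalently, $d$ is the largest nonnegative integer such that $(n-d)P$ has no lattice points in its relative interior. Every $y\in\mathbb{R}^{n+1}$ is written uniquely as $y=b_0(y)v_0+\dots+b_n(y)v_n$. $Z$ is the set of vertices $v_i$ of $S$ with $b_i(x)=0$; $V$ is the set of vertices $v_j$ of $S$ with $b_j(x)$ a positive integer. For $y\in\mathbb{R}^{n+1}$: $Z^+(y)$ (resp. $Z^-(y)$) is the set of $v_i\in Z$ with $b_i(y)>0$ (resp. $<0$), and $V^+(y)$ (resp. $V^-(y)$) is the set of $v_j\in V$ with $b_j(y)>0$ (resp. $<0$). *)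

From mathcomp Require Import all_boot all_order all_algebra.
From mathcomp Require Import reals.

Set Implicit Arguments. Unset Strict Implicit. Unset Printing Implicit Defensive.
Import Order.TTheory GRing.Theory Num.Theory.
Local Open Scope ring_scope.

(* Points of R^{n+1} are row vectors 'rV[R]_n.+1; coordinate x_{n+1} is
   the entry at index ord_max. *)

Definition lattice_pt (R : realType) (n : nat) (x : 'rV[R]_n.+1) : Prop :=
  forall i : 'I_n.+1, exists z : int, x ord0 i = z%:~R.

Definition conv_hull (R : realType) (n : nat) (A : seq 'rV[R]_n.+1)
    (y : 'rV[R]_n.+1) : Prop :=
  exists l : 'I_(size A) -> R, (forall i, 0 <= l i) /\ \sum_i l i = 1 /\
    y = \sum_i l i *: A`_i.

Definition aff_hull (R : realType) (n : nat) (A : seq 'rV[R]_n.+1)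
    (y : 'rV[R]_n.+1) : Prop :=
  exists l : 'I_(size A) -> R, \sum_i l i = 1 /\ y = \sum_i l i *: A`_i.

Definition cone_hull (R : realType) (n : nat) (A : seq 'rV[R]_n.+1)
    (y : 'rV[R]_n.+1) : Prop :=
  exists l : 'I_(size A) -> R, (forall i, 0 <= l i) /\ y = \sum_i l i *: A`_i.

Definition relint_conv (R : realType) (n : nat) (A : seq 'rV[R]_n.+1)
    (x : 'rV[R]_n.+1) : Prop :=
  conv_hull A x /\
  exists e : R, 0 < e /\ forall z, aff_hull A z ->
    (forall i, `|z ord0 i - x ord0 i| < e) -> conv_hull A z.

Definition dilate (R : realType) (n : nat) (k : nat) (A : seq 'rV[R]_n.+1) :=
  map (fun a => k%:R *: a) A.

Definition affdim (R : realType) (n : nat) (A : seq 'rV[R]_n.+1) : nat :=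
  \rank (\matrix_(i < size A) (A`_i - A`_0)).

Definition lattice_polytope_H1 (R : realType) (n : nat) (A : seq 'rV[R]_n.+1) :=
  A != [::] /\ (forall a, a \in A -> lattice_pt a /\ a ord0 ord_max = 1).

(* degree of the (n-dimensional) lattice polytope P = conv A:
   d = n+1 - min{k >= 1 | kP has a lattice point in its relative interior} *)
Definition degree (R : realType) (n : nat) (A : seq 'rV[R]_n.+1) (d : nat) :=
  (d <= n)%N /\
  (exists x, lattice_pt x /\ relint_conv (dilate (n + 1 - d) A) x) /\
  (forall k : nat, (1 <= k <= n - d)%N ->
     forall x, lattice_pt x -> ~ relint_conv (dilate k A) x).

Definition simplex_mx (R : realType) (n : nat) (v : 'I_n.+1 -> 'rV[R]_n.+1)
  : 'M[R]_n.+1 := \matrix_(i < n.+1) v i.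

Definition cone_fun (R : realType) (n : nat) (v : 'I_n.+1 -> 'rV[R]_n.+1)
    (y : 'rV[R]_n.+1) : Prop :=
  exists l : 'I_n.+1 -> R, (forall i, 0 <= l i) /\ y = \sum_i l i *: v i.

(* barycentric coordinates: y = \sum_i b_i(y) v_i, b_i(y) = bary v y i *)
Definition bary (R : realType) (n : nat) (v : 'I_n.+1 -> 'rV[R]_n.+1)
    (y : 'rV[R]_n.+1) (i : 'I_n.+1) : R :=
  (y *m invmx (simplex_mx v)) ord0 i.

Definition Zset (R : realType) (n : nat) (v : 'I_n.+1 -> 'rV[R]_n.+1)
    (x : 'rV[R]_n.+1) : {set 'I_n.+1} :=
  [set i | bary v x i == 0].

Definition Vset (R : realType) (n : nat) (v : 'I_n.+1 -> 'rV[R]_n.+1)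
    (x : 'rV[R]_n.+1) : {set 'I_n.+1} :=
  [set j | (bary v x j \is a Num.nat) && (0 < bary v x j)].

Definition Zplus R n v x y : {set 'I_n.+1} :=
  [set i in @Zset R n v x | 0 < bary v y i].
Definition Vminus R n v x y : {set 'I_n.+1} :=
  [set j in @Vset R n v x | bary v y j < 0].

(* Suppose |V^-(y)| > |Z^+(y)| and put
   w = x + sum_{i in Z^+(y)} v_i - sum_{j in V^-(y)} v_j, a lattice point at
   height h = (n-d+1) + |Z^+(y)| - |V^-(y)| <= n - d.  The barycentric
   coordinates of w are nonnegative, and the only vanishing ones are those of
   the v_i with b_i(y) < 0, or with b_i(x) = 0 and b_i(y) <= 0; hence for a
   large K and a small eps > 0, the point w - eps (x + K y) is a nonnegative
   combination of the v_i.  So w = eps x + c with c in the cone over P, and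
   since x lies in the relative interior of (n-d+1)P, w lies in the relative
   interior of hP.  As h >= 1 because eps x + c has positive height, this
   contradicts the definition of the degree d. *)
From mathcomp Require Import all_boot all_order all_algebra.
From mathcomp Require Import reals.
From mathcomp Require Import ring lra zify.
Import Order.TTheory GRing.Theory Num.Theory.
Local Open Scope ring_scope.
Set Implicit Arguments. Unset Strict Implicit.

Lemma exists_dominating_multiple (R : realFieldType) (I : finType) (a c : I -> R) :
  exists2 K, 0 < K & forall i, 0 < c i -> a i <= K * c i.
Proof.
pose q i := if 0 < c i then `|a i| / c i else 0.
have q_ge0 i : 0 <= q i by rewrite /q; case: ifP => // /ltW c0; rewrite divr_ge0.
have sum_ge0 : 0 <= \sum_i q i by apply: sumr_ge0.
exists (1 + \sum_i q i) => [|i ci]; first lra.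
have : q i <= \sum_i q i by rewrite (bigD1 i) //= lerDl sumr_ge0.
rewrite /q ci ler_pdivrMr // => aK.
have := ler_norm (a i); nra.
Qed.

Lemma sum_indicator (R : pzSemiRingType) (m : nat) (S : {set 'I_m}) :
  \sum_i ((i \in S)%:R : R) = #|S|%:R.
Proof.
rewrite -sum1_card natr_sum [RHS]big_mkcond /=.
by apply: eq_bigr => i _; case: (i \in S).
Qed.

Section Hulls.
Variables (R : realType) (n : nat).
Implicit Types (A : seq 'rV[R]_n.+1) (z : 'rV[R]_n.+1).

(* Coefficients are indexed by nat rather than by 'I_(size A), so that the
   hulls of [A] and of [dilate k A] are described over the same index type. *)
Definition extf (m : nat) (l : 'I_m -> R) (j : nat) : R :=
  oapp l 0 (insub j : option 'I_m).

Lemma extfE m (l : 'I_m -> R) (i : 'I_m) : extf l i = l i.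
Proof. by rewrite /extf valK. Qed.

Lemma extf_ge0 m (l : 'I_m -> R) : (forall i, 0 <= l i) -> forall j, 0 <= extf l j.
Proof. by move=> l0 j; rewrite /extf; case: insubP => [i _ _|_] /=. Qed.

Lemma coneN A z : cone_hull A z <->
  exists f : nat -> R, (forall i, 0 <= f i) /\ z = \sum_(i < size A) f i *: A`_i.
Proof.
split=> [[l [l0 ->]]|[f [f0 ->]]]; last by exists (fun i => f i).
exists (extf l); split; first exact: extf_ge0.
by apply: eq_bigr => i _; rewrite extfE.
Qed.

Lemma convN A z : conv_hull A z <->
  exists f : nat -> R, (forall i, 0 <= f i) /\ \sum_(i < size A) f i = 1 /\
     z = \sum_(i < size A) f i *: A`_i.
Proof.
split=> [[l [l0 [l1 ->]]]|[f [f0 [f1 ->]]]]; last by exists (fun i => f i).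
exists (extf l); split; first exact: extf_ge0.
by split; [rewrite -l1 |]; apply: eq_bigr => i _; rewrite extfE.
Qed.

Lemma affN A z : aff_hull A z <->
  exists f : nat -> R, \sum_(i < size A) f i = 1 /\
     z = \sum_(i < size A) f i *: A`_i.
Proof.
split=> [[l [l1 ->]]|[f [f1 ->]]]; last by exists (fun i => f i).
by exists (extf l); split; [rewrite -l1 |]; apply: eq_bigr => i _; rewrite extfE.
Qed.

Lemma conv_aff A z : conv_hull A z -> aff_hull A z.
Proof. by move=> [l [_ lz]]; exists l. Qed.

Lemma conv_cone A z : conv_hull A z -> cone_hull A z.
Proof. by move=> [l [l0 [_ ->]]]; exists l. Qed.

Lemma size_dilate k A : size (dilate k A) = size A.
Proof. by rewrite size_map. Qed.

Lemma nth_dilate k A i : (dilate k A)`_i = k%:R *: A`_i.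
Proof.
have [iA|iA] := ltnP i (size A); first by rewrite (nth_map 0).
by rewrite !nth_default ?size_dilate // scaler0.
Qed.

Lemma sum_dilate k A (f : nat -> R) :
  \sum_(i < size (dilate k A)) f i *: (dilate k A)`_i =
  \sum_(i < size A) (k%:R * f i) *: A`_i.
Proof.
rewrite size_dilate; apply: eq_bigr => i _.
by rewrite nth_dilate scalerA mulrC.
Qed.

Lemma convD k A z : (0 < k)%N -> conv_hull (dilate k A) z <->
  exists f : nat -> R, (forall i, 0 <= f i) /\ \sum_(i < size A) f i = k%:R /\
     z = \sum_(i < size A) f i *: A`_i.
Proof.
move=> k0; have kR : (k%:R : R) != 0 by rewrite pnatr_eq0 -lt0n.
rewrite convN; split=> [[f [f0 [f1 ->]]]|[f [f0 [f1 ->]]]].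
  exists (fun i => k%:R * f i); split=> [i|]; first by rewrite mulr_ge0.
  by rewrite sum_dilate -mulr_sumr; move: f1; rewrite size_dilate => ->; rewrite mulr1.
exists (fun i => f i / k%:R); split=> [i|]; first by rewrite divr_ge0.
rewrite (sum_dilate _ _ (fun j => f j / k%:R)) size_dilate -mulr_suml f1 divff //.
split=> //.
by apply: eq_bigr => i _; rewrite mulrC divfK.
Qed.

Lemma affD k A z : (0 < k)%N -> aff_hull (dilate k A) z <->
  exists f : nat -> R, \sum_(i < size A) f i = k%:R /\
     z = \sum_(i < size A) f i *: A`_i.
Proof.
move=> k0; have kR : (k%:R : R) != 0 by rewrite pnatr_eq0 -lt0n.
rewrite affN; split=> [[f [f1 ->]]|[f [f1 ->]]].
  exists (fun i => k%:R * f i).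
  by rewrite sum_dilate -mulr_sumr; move: f1; rewrite size_dilate => ->; rewrite mulr1.
exists (fun i => f i / k%:R).
rewrite (sum_dilate _ _ (fun j => f j / k%:R)) size_dilate -mulr_suml f1 divff //.
split=> //.
by apply: eq_bigr => i _; rewrite mulrC divfK.
Qed.

Lemma aff_dilate_shift k h A x z w a : (0 < k)%N -> (0 < h)%N ->
  aff_hull (dilate k A) x -> aff_hull (dilate h A) z -> aff_hull (dilate h A) w ->
  aff_hull (dilate k A) (x + a *: (z - w)).
Proof.
move=> k0 h0 /(affD _ _ k0) [f [f1 ->]] /(affD _ _ h0) [g [g1 ->]].
move=> /(affD _ _ h0) [u [u1 ->]]; apply/affD => //.
exists (fun i => f i + a * (g i - u i)); split.
  by rewrite big_split /= -mulr_sumr sumrB f1 g1 u1 subrr mulr0 addr0.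
rewrite -sumrB scaler_sumr -big_split /=; apply: eq_bigr => i _.
by rewrite -scalerBl scalerA -scalerDl.
Qed.

Section Cone.
Variable A : seq 'rV[R]_n.+1.
Hypothesis A_ht1 : forall a, a \in A -> a ord0 ord_max = 1.

Lemma ht_comb (f : nat -> R) :
  (\sum_(i < size A) f i *: A`_i) ord0 ord_max = \sum_(i < size A) f i.
Proof.
rewrite summxE; apply: eq_bigr => i _.
by rewrite mxE A_ht1 ?mulr1 ?mem_nth.
Qed.

Lemma cone_ht_ge0 z : cone_hull A z -> 0 <= z ord0 ord_max.
Proof. by move=> /coneN [f [f0 ->]]; rewrite ht_comb sumr_ge0. Qed.

Lemma cone_conv_dilate k z : (0 < k)%N ->
  cone_hull A z -> z ord0 ord_max = k%:R -> conv_hull (dilate k A) z.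
Proof.
move=> k0 /coneN [f [f0 zE]] zk; apply/convD => //; exists f.
by rewrite -zk zE ht_comb.
Qed.

Lemma conv_dilate_cone k z : (0 < k)%N -> conv_hull (dilate k A) z ->
  cone_hull A z /\ z ord0 ord_max = k%:R.
Proof.
move=> k0 /(convD _ _ k0) [f [f0 [f1 zE]]].
by split; [apply/coneN; exists f | rewrite zE ht_comb].
Qed.

Lemma aff_dilate_ht k z : (0 < k)%N -> aff_hull (dilate k A) z -> z ord0 ord_max = k%:R.
Proof. by move=> k0 /(affD _ _ k0) [f [f1 ->]]; rewrite ht_comb. Qed.

Lemma cone0 : cone_hull A 0.
Proof.
by apply/coneN; exists (fun=> 0); split=> //; rewrite big1 // => i _; rewrite scale0r.
Qed.

Lemma coneD z1 z2 : cone_hull A z1 -> cone_hull A z2 -> cone_hull A (z1 + z2).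
Proof.
move=> /coneN [f [f0 ->]] /coneN [g [g0 ->]]; apply/coneN.
exists (fun i => f i + g i); split=> [i|]; first by rewrite addr_ge0.
by rewrite -big_split /=; apply: eq_bigr => i _; rewrite scalerDl.
Qed.

Lemma coneZ a z : 0 <= a -> cone_hull A z -> cone_hull A (a *: z).
Proof.
move=> a0 /coneN [f [f0 ->]]; apply/coneN.
exists (fun i => a * f i); split=> [i|]; first by rewrite mulr_ge0.
by rewrite scaler_sumr; apply: eq_bigr => i _; rewrite scalerA.
Qed.

Lemma cone_sum (I : finType) (c : I -> R) (u : I -> 'rV[R]_n.+1) :
  (forall i, 0 <= c i) -> (forall i, cone_hull A (u i)) ->
  cone_hull A (\sum_i c i *: u i).
Proof.
move=> c0 u0; apply: (big_ind (cone_hull A)); [exact: cone0 | exact: coneD |].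
by move=> i _; apply: coneZ.
Qed.

(* A point z of aff(hP) within eps*e of w is eps z' + c with z' in aff(kP)
   within e of x, hence z' in kP. *)
Lemma relint_dilate_shift k h x w eps c : (0 < k)%N -> (0 < h)%N ->
  relint_conv (dilate k A) x -> 0 < eps -> cone_hull A c ->
  w = eps *: x + c -> w ord0 ord_max = h%:R -> relint_conv (dilate h A) w.
Proof.
move=> k0 h0 [xconv [e [e0 xball]]] eps0 ccone wE wh.
have [xcone _] := conv_dilate_cone k0 xconv.
have epsx_c_cone z : conv_hull (dilate k A) z -> cone_hull A (eps *: z + c).
  move=> /(conv_dilate_cone k0) [zcone _].
  by apply: coneD => //; apply: coneZ => //; apply: ltW.
have wconv : conv_hull (dilate h A) w.
  by apply: cone_conv_dilate => //; rewrite wE; apply: epsx_c_cone.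
split=> //; exists (eps * e); split=> [|z zaff zclose]; first exact: mulr_gt0.
pose z' := x + eps^-1 *: (z - w).
have z'conv : conv_hull (dilate k A) z'.
  apply: xball => [|i].
    exact: aff_dilate_shift (conv_aff xconv) zaff (conv_aff wconv).
  rewrite /z' !mxE addrAC subrr add0r normrM gtr0_norm ?invr_gt0 //.
  by rewrite -(ltr_pM2l eps0) mulrA mulfV ?gt_eqF // mul1r.
apply: cone_conv_dilate => //; last exact: aff_dilate_ht zaff.
have -> : z = eps *: z' + c.
  by rewrite /z' scalerDr scalerA mulfV ?gt_eqF // scale1r addrAC -wE addrC subrK.
exact: epsx_c_cone.
Qed.

End Cone.

Section Simplex.
Variable v : 'I_n.+1 -> 'rV[R]_n.+1.
Hypothesis v_ht1 : forall i, v i ord0 ord_max = 1.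
Hypothesis v_rank : \rank (\matrix_(i < n.+1) (v i - v ord0)) = n.

(* The edge vectors v_i - v_0 have height 0 while v_0 has height 1, so v_0 is
   not in their span and adding it raises the rank from n to n+1. *)
Lemma simplex_unit : simplex_mx v \in unitmx.
Proof.
set M := simplex_mx v; set D := \matrix_(i < n.+1) (v i - v ord0).
have vM i : (v i <= M)%MS by rewrite -[v i](rowK v i) row_sub.
have DM : (D <= M)%MS by apply/row_subP => i; rewrite rowK addmx_sub ?eqmx_opp.
have v0D : ~~ (v ord0 <= D)%MS.
  apply/negP => /submxP [X /(congr1 (fun u : 'rV_n.+1 => u ord0 ord_max))].
  rewrite v_ht1 mxE big1 => [/eqP|k _]; first by rewrite oner_eq0.
  by rewrite !mxE !v_ht1 subrr mulr0.
have : (\rank D < \rank M)%N.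
  rewrite (ltn_leqif (mxrank_leqif_sup DM)); apply: contra v0D.
  exact: submx_trans (vM ord0).
by rewrite -row_free_unit /row_free eqn_leq rank_leq_row v_rank.
Qed.

Lemma bary_sum z : z = \sum_i bary v z i *: v i.
Proof.
rewrite -{1}[z](mulmxKV simplex_unit) mulmx_sum_row.
by apply: eq_bigr => i _; rewrite rowK.
Qed.

Lemma bary_comb (f : 'I_n.+1 -> R) j : bary v (\sum_i f i *: v i) j = f j.
Proof.
have -> : \sum_i f i *: v i = (\row_i f i) *m simplex_mx v.
  by rewrite mulmx_sum_row; apply: eq_bigr => i _; rewrite rowK mxE.
by rewrite /bary mulmxK ?simplex_unit // mxE.
Qed.

Lemma ht_vcomb (f : 'I_n.+1 -> R) :
  (\sum_i f i *: v i) ord0 ord_max = \sum_i f i.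
Proof. by rewrite summxE; apply: eq_bigr => i _; rewrite mxE v_ht1 mulr1. Qed.

Variables x y : 'rV[R]_n.+1.

Definition shift_coef (i : 'I_n.+1) : R :=
  (i \in Zplus v x y)%:R - (i \in Vminus v x y)%:R.

Definition shift_pt : 'rV[R]_n.+1 := x + \sum_i shift_coef i *: v i.

Lemma shift_coef_cases i : 0 <= bary v x i ->
  0 <= bary v x i + shift_coef i /\
  (bary v x i + shift_coef i = 0 ->
     bary v y i < 0 \/ (bary v x i = 0 /\ bary v y i <= 0)).
Proof.
rewrite /shift_coef !inE; move: (bary v x i) (bary v y i) => bx b_y x_ge0.
case: (boolP ((bx \is a Num.nat) && (0 < bx) && (b_y < 0))) => /= [|_].
  move=> /andP [/andP [/natrP [m xm] x_gt0] y_lt0].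
  rewrite gt_eqF //= xm; rewrite xm ltr0n in x_gt0.
  by have := ler_nat R 1 m; rewrite x_gt0 => m1; split=> [|_]; [lra | left].
have [->|xn0] := eqVneq bx 0.
  have [y_gt0|y_le0] := ltP 0 b_y => /=; first by split=> [|a0]; lra.
  by split=> [|_]; [lra | right].
by rewrite /= subrr addr0; split=> // x0; rewrite x0 eqxx in xn0.
Qed.

Lemma shift_pt_decomposition (A : seq 'rV[R]_n.+1) :
  (forall i, cone_hull A (v i)) -> (forall i, 0 <= bary v x i) -> cone_hull A y ->
  exists2 eps, 0 < eps & cone_hull A (shift_pt - eps *: x).
Proof.
move=> v_cone x_ge0 y_cone.
pose a i := bary v x i + shift_coef i.
have [K K_gt0 xK] := exists_dominating_multiple (bary v x) (fun i => - bary v y i).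
pose b i := bary v x i + K * bary v y i.
have [L L_gt0 bL] := exists_dominating_multiple b a.
exists L^-1; first by rewrite invr_gt0.
have -> : shift_pt - L^-1 *: x =
          (L^-1 * K) *: y + \sum_i (a i - L^-1 * b i) *: v i.
  rewrite /shift_pt {1 2}(bary_sum x) {1}(bary_sum y) !scaler_sumr.
  rewrite -!big_split -sumrB /=; apply: eq_bigr => i _.
  by rewrite !scalerA -scaleNr -!scalerDl /a /b; congr (_ *: _); ring.
apply: coneD; first by apply: coneZ; rewrite // mulr_ge0 ?invr_ge0 ?ltW.
apply: cone_sum => // i; have [a_ge0 a0_cases] := shift_coef_cases (x_ge0 i).
have [a_gt0|a_le0] := ltP 0 (a i).
  rewrite subr_ge0 -(ler_pM2l L_gt0) mulrA mulfV ?gt_eqF // mul1r.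
  exact: bL.
have a0 : a i = 0 by apply/le_anti; rewrite a_le0.
have b_le0 : b i <= 0.
  have [y_lt0|[x0 y_le0]] := a0_cases a0.
    by have := xK i; rewrite oppr_gt0 => /(_ y_lt0); rewrite /b; lra.
  by rewrite /b x0 add0r mulr_ge0_le0 // ltW.
by rewrite a0 sub0r oppr_ge0 mulr_ge0_le0 // invr_ge0 ltW.
Qed.

Lemma shift_pt_ht :
  shift_pt ord0 ord_max =
  x ord0 ord_max + #|Zplus v x y|%:R - #|Vminus v x y|%:R.
Proof. by rewrite /shift_pt mxE ht_vcomb sumrB !sum_indicator addrA. Qed.

Lemma shift_pt_lattice :
  lattice_pt x -> (forall i, lattice_pt (v i)) -> lattice_pt shift_pt.
Proof.
move=> x_lat v_lat j; apply/intrP; rewrite /shift_pt mxE summxE.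
apply: rpredD; first by apply/intrP; apply: x_lat.
apply: rpred_sum => i _; rewrite mxE; apply: rpredM.
  by apply: rpredB; apply: natr_int.
by apply/intrP; apply: v_lat.
Qed.

End Simplex.

End Hulls.

Theorem lemma2p4 (R : realType) (n d : nat) (A : seq 'rV[R]_n.+1)
    (x : 'rV[R]_n.+1) (v : 'I_n.+1 -> 'rV[R]_n.+1) :
  lattice_polytope_H1 A -> affdim A = n -> @degree R n A d ->
  lattice_pt x -> relint_conv (dilate (n - d + 1) A) x ->
  (forall i, lattice_pt (v i)) -> (forall i, conv_hull A (v i)) ->
  \rank (\matrix_(i < n.+1) (v i - v ord0)) = n ->
  cone_fun v x ->
  forall y : 'rV[R]_n.+1, cone_hull A y ->
  (#|Vminus v x y| <= #|Zplus v x y|)%N.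
Proof.
move=> [_ A_lat] _ [_ [_ no_relint]] x_lat x_relint v_lat v_conv v_rank.
move=> [l [l_ge0 xE]] y y_cone.
have A_ht1 a : a \in A -> a ord0 ord_max = 1 by case/A_lat.
have v_ht1 i : v i ord0 ord_max = 1.
  by have /convN [f [_ [f1 ->]]] := v_conv i; rewrite ht_comb.
have x_bary_ge0 i : 0 <= bary v x i by rewrite xE bary_comb.
have k_gt0 : (0 < n - d + 1)%N by rewrite addn1.
have [_ x_ht] := conv_dilate_cone A_ht1 k_gt0 x_relint.1.
have [eps eps_gt0 c_cone] := shift_pt_decomposition v_ht1 v_rank
  (fun i => conv_cone (v_conv i)) x_bary_ge0 y_cone.
set c := shift_pt v x y - eps *: x in c_cone.
have wE : shift_pt v x y = eps *: x + c by rewrite addrC subrK.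
have w_ht_gt0 : 0 < shift_pt v x y ord0 ord_max.
  rewrite wE mxE [_ ord0 ord_max]mxE x_ht.
  by apply: ltr_wpDr; [exact: cone_ht_ge0 c_cone | rewrite mulr_gt0 ?ltr0n].
rewrite leqNgt; apply/negP => Z_lt_V.
pose h := (n - d + 1 + #|Zplus v x y| - #|Vminus v x y|)%N.
have V_lt : (#|Vminus v x y| < n - d + 1 + #|Zplus v x y|)%N.
  by move: w_ht_gt0; rewrite shift_pt_ht // x_ht -(ltr_nat R) natrD; lra.
have w_ht : shift_pt v x y ord0 ord_max = h%:R.
  by rewrite shift_pt_ht // x_ht /h natrB 1?ltnW // -natrD.
have h_gt0 : (0 < h)%N by rewrite subn_gt0.
have h_le : (h <= n - d)%N by rewrite /h; lia.
apply: (no_relint h _ _ (shift_pt_lattice y x_lat v_lat)); first by rewrite h_gt0.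
exact: (relint_dilate_shift A_ht1 k_gt0 h_gt0 x_relint eps_gt0 c_cone wE w_ht).
Qed.
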